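(* For integers $n\ge1$, $t\ge0$ and $\bm{N}=(t,t,\ldots,t,-nt)\in\mathbb{Z}^{n+1}$, \[ (t+1)^{\binom n2}\;\ge\;K_n(\bm{N})\;\ge\;\prod_{i=1}^{n-1}(it+1). \]
   Context: $K_n(\bm{N})$ is the number of integer vectors $(f_{ij})_{0\le i<j\le n}\in\mathbb{Z}_{\ge0}^{\binom{n+1}{2}}$ with $\sum_{j>i} f_{ij}-\sum_{k<i} f_{ki}=N_i$ for every $i\in\{0,\ldots,n\}$. *)

From mathcomp Require Import all_boot all_order all_algebra.
Set Implicit Arguments. Unset Strict Implicit. Unset Printing Implicit Defensive.
Import Order.TTheory GRing.Theory Num.Theory.

Definition edges (n : nat) := {p : 'I_n.+1 * 'I_n.+1 | (p.1 < p.2)%N}.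

Definition flow_vec (n : nat) := {ffun edges n -> nat}.

Definition is_flow (n : nat) (N : 'I_n.+1 -> int) (f : flow_vec n) : bool :=
  [forall i : 'I_n.+1,
     ((\sum_(e : edges n | (sval e).1 == i) (f e)%:Z)
      - (\sum_(e : edges n | (sval e).2 == i) (f e)%:Z))%R == N i].

(* K_n(N) = the number of such vectors: it is the size of any duplicate-free
   list enumerating exactly the solutions. *)
Definition enumerates_flows (n : nat) (N : 'I_n.+1 -> int) (s : seq (flow_vec n)) : Prop :=
  uniq s /\ forall f : flow_vec n, (f \in s) = is_flow N f.

Definition Nvec (n t : nat) : 'I_n.+1 -> int :=
  fun i => if (i < n)%N then (t%:Z)%R else (- (n * t)%:Z)%R.
Arguments Nvec : clear implicits.

(* Build a flow one vertex at a time.  Once the flows into vertices 0, ..., m-1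
   are fixed, each vertex k < m still has to send its surplus
   a_k = t + inflow(k) - outflow(k) >= 0 to later vertices; the flows into
   vertex m are then any vector x with x_k <= a_k, and the flows into the sink n
   are forced to be a.  Conservation gives sum_k a_k = m t, so the number
   prod_k (a_k + 1) of choices at vertex m lies between m t + 1 (expand the
   product) and (t + 1)^m (AM-GM).  Multiplying over m < n gives both bounds. *)

From mathcomp Require Import all_boot all_order all_algebra.
From mathcomp Require Import zify.
Set Implicit Arguments. Unset Strict Implicit. Unset Printing Implicit Defensive.
Import Order.TTheory GRing.Theory Num.Theory.

Fixpoint box (r : seq nat) : seq (seq nat) :=
  if r is a :: r' then [seq x :: y | x <- iota 0 a.+1, y <- box r'] else [:: [::]].

Lemma size_box r : size (box r) = \prod_(a <- r) a.+1.
Proof.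
elim: r => [|a r IHr]; first by rewrite big_nil.
by rewrite big_cons -IHr -(size_iota 0 a.+1) -(size_allpairs cons).
Qed.

Lemma box_uniq r : uniq (box r).
Proof.
elim: r => [|a r IHr] //.
apply: allpairs_uniq => //; first exact: iota_uniq.
by move=> [b x] [b' x'] _ _ [-> ->].
Qed.

Lemma mem_box r x :
  reflect (size x = size r /\ forall k, nth 0 x k <= nth 0 r k) (x \in box r).
Proof.
elim: r x => [|a r IHr] x.
  by rewrite inE; apply: (iffP eqP) => [-> | [/size0nil ->]] //.
apply: (iffP allpairsP) => [[[b y] [b_le /IHr[sz le] ->]] | [sz le]].
  by split=> [|[|k]] /=; [rewrite sz | move: b_le; rewrite mem_iota | exact: le].
case: x sz le => // b x [sz] le.
exists (b, x); split=> //; first by rewrite mem_iota; exact: (le 0).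
by apply/IHr; split=> // k; exact: (le k.+1).
Qed.

Lemma sum_ltn_prod_succ (r : seq nat) : \sum_(a <- r) a < \prod_(a <- r) a.+1.
Proof.
elim: r => [|a r IHr]; first by rewrite !big_nil.
rewrite !big_cons; have := leq_mul (leqnn a.+1) IHr; nia.
Qed.

Lemma prod_succ_AGM (r : seq nat) t :
  \sum_(a <- r) a = size r * t -> \prod_(a <- r) a.+1 <= t.+1 ^ size r.
Proof.
move=> sum_r; set L := size r.
have big_r op idx (F : nat -> nat) :
    \big[op/idx]_(a <- r) F a = \big[op/idx]_(i in 'I_L) F (nth 0 r i).
  by rewrite (big_nth 0) big_mkord.
have E_ge0 : {in 'I_L, forall i : 'I_L, (0 <= (nth 0 r i).+1%:R *+ #|'I_L| :> int)%R}.
  by move=> i _; rewrite mulrn_wge0.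
have := (leif_AGM_scaled E_ge0).1.
rewrite prodrMn_const card_ord -natr_prod -mulrnA -natr_sum -natrX ler_nat.
have -> : \sum_(i in 'I_L) (nth 0 r i).+1 = L * t.+1.
  rewrite -big_r (eq_bigr (fun a => a + 1)) => [|a _]; last exact: esym (addn1 a).
  by rewrite big_split /= sum_r big_const_seq count_predT iter_addn_0; lia.
by rewrite -big_r expnMn mulnC leq_pmul2l // expn_gt0 lt0n orNb.
Qed.

(* c = [:: c_0; ...; c_(m-1)] with c_j = [:: f_0j; ...; f_(j-1)j] records the
   flows among the first m vertices. *)
Definition entry (c : seq (seq nat)) (i j : nat) : nat := nth 0 (nth [::] c j) i.
Definition inflow (c : seq (seq nat)) (k : nat) : nat := \sum_(0 <= i < k) entry c i k.
Definition outflow (c : seq (seq nat)) (k : nat) : nat :=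
  \sum_(0 <= j < size c | k < j) entry c k j.
Definition surplus (t : nat) (c : seq (seq nat)) : seq nat :=
  [seq t + inflow c k - outflow c k | k <- iota 0 (size c)].
Definition shaped (c : seq (seq nat)) : bool := shape c == iota 0 (size c).
Definition feasible (t : nat) (c : seq (seq nat)) : bool :=
  shaped c && all (fun k => outflow c k <= t + inflow c k) (iota 0 (size c)).

Fixpoint partial_flows (t m : nat) : seq (seq (seq nat)) :=
  if m is m'.+1 then [seq rcons c x | c <- partial_flows t m', x <- box (surplus t c)]
  else [:: [::]].

Lemma entry_rcons c x i j : entry (rcons c x) i j =
  if j < size c then entry c i j else if j == size c then nth 0 x i else 0.
Proof. by rewrite /entry nth_rcons; do 2!case: ifP => //; rewrite nth_nil. Qed.

Lemma inflow_rcons c x k : k < size c -> inflow (rcons c x) k = inflow c k.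
Proof. by move=> lt_k; apply: eq_big_nat => i _; rewrite entry_rcons lt_k. Qed.

Lemma inflow_rcons_size c x :
  inflow (rcons c x) (size c) = \sum_(0 <= i < size c) nth 0 x i.
Proof. by apply: eq_big_nat => i _; rewrite entry_rcons ltnn eqxx. Qed.

Lemma outflow_rcons c x k :
  k < size c -> outflow (rcons c x) k = outflow c k + nth 0 x k.
Proof.
move=> lt_k; rewrite /outflow size_rcons big_mkcond big_nat_recr //=.
rewrite entry_rcons ltnn eqxx lt_k [in RHS]big_mkcond; congr addn.
by apply: eq_big_nat => j /andP[_ lt_j]; rewrite entry_rcons lt_j.
Qed.

Lemma outflow_rcons_size c x : outflow (rcons c x) (size c) = 0.
Proof.
rewrite /outflow size_rcons big_nat_cond big1 // => j /andP[/andP[_ le_j] lt_j].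
by rewrite ltnS leqNgt lt_j in le_j.
Qed.

Lemma shaped_rcons c x : shaped (rcons c x) = shaped c && (size x == size c).
Proof.
by rewrite /shaped /shape map_rcons size_rcons -addn1 iotaD cats1 eqseq_rcons.
Qed.

Lemma size_surplus t c : size (surplus t c) = size c.
Proof. by rewrite size_map size_iota. Qed.

Lemma nth_surplus t c k :
  k < size c -> nth 0 (surplus t c) k = t + inflow c k - outflow c k.
Proof. by move=> lt_k; rewrite (nth_map 0) ?size_iota ?nth_iota. Qed.

Lemma sum_inflow_outflow c :
  \sum_(0 <= k < size c) inflow c k = \sum_(0 <= k < size c) outflow c k.
Proof.
have -> : \sum_(0 <= k < size c) inflow c k =
    \sum_(0 <= k < size c) \sum_(0 <= i < size c) (if i < k then entry c i k else 0).
  apply: eq_big_nat => k /andP[_ lt_k].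
  by rewrite /inflow (big_nat_widen 0 k (size c) xpredT) ?(ltnW lt_k) // big_mkcond.
by rewrite exchange_big_nat; apply: eq_big_nat => i _; rewrite /outflow [RHS]big_mkcond.
Qed.

Lemma sum_surplus t c : feasible t c -> \sum_(a <- surplus t c) a = size c * t.
Proof.
case/andP=> _ /allP feas; rewrite big_map big_seq sumnB // big_split -!big_seq /=.
rewrite big_const_seq count_predT size_iota iter_addn_0 mulnC.
by have := sum_inflow_outflow c; rewrite /index_iota subn0 => ->; rewrite addnK.
Qed.

Lemma feasible_rcons t c x :
  feasible t (rcons c x) = feasible t c && (x \in box (surplus t c)).
Proof.
have step k : k \in iota 0 (size c) ->
    (outflow (rcons c x) k <= t + inflow (rcons c x) k) =
    (outflow c k + nth 0 x k <= t + inflow c k).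
  by rewrite mem_iota => lt_k; rewrite outflow_rcons ?inflow_rcons.
rewrite /feasible shaped_rcons size_rcons -addn1 iotaD all_cat /= add0n.
rewrite outflow_rcons_size leq0n !andbT (eq_in_all step) -!andbA; congr andb.
apply/andP/andP => [[/eqP sz /allP le] | [/allP le /mem_box[sz bnd]]].
  split; first by apply/allP => k /le; apply: leq_trans; exact: leq_addr.
  apply/mem_box; rewrite size_surplus; split=> // k.
  have [lt_k | ge_k] := ltnP k (size c); last by rewrite nth_default ?sz.
  by have := le k; rewrite nth_surplus // mem_iota => /(_ lt_k); lia.
rewrite size_surplus in sz; rewrite sz eqxx; split=> //; apply/allP => k k_in.
have := le k k_in; have := bnd k; move: k_in; rewrite mem_iota => lt_k.
by rewrite nth_surplus //; lia.
Qed.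

Lemma mem_partial_flows t m c :
  (c \in partial_flows t m) = (size c == m) && feasible t c.
Proof.
elim: m c => [|m IHm] c; first by rewrite inE; case: c.
apply/allpairsPdep/idP => [[c' [x [c'_in x_in ->]]] | ].
  move: c'_in; rewrite IHm => /andP[/eqP sz feas].
  by rewrite size_rcons sz eqxx feasible_rcons feas x_in.
case/lastP: c => // c' x; rewrite size_rcons eqSS feasible_rcons => /and3P[sz feas x_in].
by exists c', x; rewrite IHm sz feas x_in.
Qed.

Lemma partial_flows_uniq t m : uniq (partial_flows t m).
Proof.
elim: m => [|m IHm] //; apply: allpairs_uniq_dep => //.
  by move=> c _; exact: box_uniq.
by move=> [c x] [c' x'] _ _ /rcons_inj[-> ->].
Qed.

Lemma size_partial_flowsS t m :
  size (partial_flows t m.+1) = \sum_(c <- partial_flows t m) \prod_(a <- surplus t c) a.+1.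
Proof.
by rewrite size_allpairs_dep sumnE big_map; apply: eq_bigr => c _; exact: size_box.
Qed.

Lemma prod_surplus_bounds t c : feasible t c ->
  size c * t < \prod_(a <- surplus t c) a.+1 <= t.+1 ^ size c.
Proof.
move=> feas; rewrite -{1}(sum_surplus feas) sum_ltn_prod_succ -(size_surplus t c).
by apply: prod_succ_AGM; rewrite sum_surplus // size_surplus.
Qed.

Lemma prod_leq_size_partial_flows t m :
  \prod_(0 <= i < m) (i * t + 1) <= size (partial_flows t m).
Proof.
elim: m => [|m IHm]; first by rewrite big_geq.
rewrite big_nat_recr //= size_partial_flowsS.
apply: leq_trans (leq_mul IHm (leqnn _)) _.
have -> : size (partial_flows t m) * (m * t + 1) =
    \sum_(c <- partial_flows t m) (m * t + 1).
  by rewrite big_const_seq count_predT iter_addn_0 mulnC.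
rewrite !big_seq; apply: leq_sum => c; rewrite mem_partial_flows => /andP[/eqP <- feas].
by have /andP[lb _] := prod_surplus_bounds feas; rewrite addn1.
Qed.

Lemma size_partial_flows_leq t m : size (partial_flows t m) <= t.+1 ^ 'C(m, 2).
Proof.
elim: m => [|m IHm] //; rewrite size_partial_flowsS binS bin1 expnD.
apply: (@leq_trans (\sum_(c <- partial_flows t m) t.+1 ^ m)).
  rewrite !big_seq; apply: leq_sum => c; rewrite mem_partial_flows => /andP[/eqP <- feas].
  by have /andP[_ ub] := prod_surplus_bounds feas.
by rewrite big_const_seq count_predT iter_addn_0 mulnC leq_mul2r IHm orbT.
Qed.

Definition flow_at n (f : flow_vec n) (i j : nat) : nat :=
  if insub (inord i, inord j) : option (edges n) is Some e then f e else 0.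

Definition flow_cols n (f : flow_vec n) : seq (seq nat) :=
  [seq [seq flow_at f i j | i <- iota 0 j] | j <- iota 0 n.+1].

Definition cols_flow n (c : seq (seq nat)) : flow_vec n :=
  [ffun e : edges n => entry c (sval e).1 (sval e).2].

Lemma flow_atE n (f : flow_vec n) (e : edges n) : flow_at f (sval e).1 (sval e).2 = f e.
Proof. by rewrite /flow_at !inord_val -surjective_pairing valK. Qed.

Lemma flow_at_cols_flow n c i j :
  i < j <= n -> flow_at (cols_flow n c) i j = entry c i j.
Proof.
case/andP=> lt_ij le_jn.
have lt_inord : (inord i : 'I_n.+1) < (inord j : 'I_n.+1) by rewrite !inordK //; lia.
by rewrite /flow_at insubT /= ffunE /= !inordK //; lia.
Qed.

Lemma size_flow_cols n (f : flow_vec n) : size (flow_cols f) = n.+1.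
Proof. by rewrite size_map size_iota. Qed.

Lemma shaped_flow_cols n (f : flow_vec n) : shaped (flow_cols f).
Proof.
rewrite /shaped /shape size_flow_cols -map_comp.
by rewrite (eq_map (g := id)) ?map_id // => j; rewrite /= size_map size_iota.
Qed.

Lemma entry_flow_cols n (f : flow_vec n) i j :
  i < j <= n -> entry (flow_cols f) i j = flow_at f i j.
Proof.
case/andP=> lt_ij le_jn.
by rewrite /entry (nth_map 0) ?size_iota ?nth_iota // (nth_map 0) ?size_iota ?nth_iota.
Qed.

Lemma flow_colsK n : cancel (@flow_cols n) (@cols_flow n).
Proof.
move=> f; apply/ffunP => e; rewrite ffunE -flow_atE entry_flow_cols //.
by case: e => -[i j] /= ->; rewrite -ltnS ltn_ord.
Qed.

Lemma cols_flowK n c : size c = n.+1 -> shaped c -> flow_cols (cols_flow n c) = c.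
Proof.
move=> sz /eqP sh.
apply: (@eq_from_nth _ [::]) => [|j]; rewrite size_flow_cols ?sz // => lt_j.
have sz_j : size (nth [::] c j) = j by rewrite -nth_shape sh nth_iota ?sz.
rewrite (nth_map 0) ?size_iota ?nth_iota //; apply: (@eq_from_nth _ 0) => [|i].
  by rewrite size_map size_iota sz_j.
rewrite size_map size_iota => lt_i.
by rewrite (nth_map 0) ?size_iota ?nth_iota ?flow_at_cols_flow //; lia.
Qed.

Lemma sum_edges n (P : pred ('I_n.+1 * 'I_n.+1)) (F : 'I_n.+1 * 'I_n.+1 -> nat) :
  \sum_(e : edges n | P (sval e)) F (sval e) =
  \sum_(p : 'I_n.+1 * 'I_n.+1 | (p.1 < p.2) && P p) F p.
Proof.
rewrite [RHS](reindex_omap (val : edges n -> _) insub) => [|p /andP[lt_p _]].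
  by apply: eq_bigl => e; rewrite valK eqxx (valP e) andbT.
by rewrite insubT.
Qed.

Lemma sum_edges_src n (F : nat -> nat -> nat) (k : 'I_n.+1) :
  \sum_(e : edges n | (sval e).1 == k) F (sval e).1 (sval e).2 =
  \sum_(0 <= j < n.+1 | k < j) F k j.
Proof.
rewrite (sum_edges (fun p => p.1 == k) (fun p => F p.1 p.2)).
rewrite (eq_bigl (fun p : 'I_n.+1 * 'I_n.+1 => (p.1 == k) && (k < p.2))); last first.
  by move=> [i j] /=; rewrite andbC; case: eqP => // ->.
rewrite -(pair_big_dep (fun i => i == k) (fun _ (j : 'I_n.+1) => k < j) (fun i j => F i j)).
by rewrite big_pred1_eq big_mkord.
Qed.

Lemma sum_edges_dst n (F : nat -> nat -> nat) (k : 'I_n.+1) :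
  \sum_(e : edges n | (sval e).2 == k) F (sval e).1 (sval e).2 =
  \sum_(0 <= i < k) F i k.
Proof.
rewrite (sum_edges (fun p => p.2 == k) (fun p => F p.1 p.2)).
rewrite (eq_bigl (fun p : 'I_n.+1 * 'I_n.+1 =>
    xpredT p.1 && ((p.2 == k) && (p.1 < k)))); last first.
  by move=> [i j] /=; case: eqP => [-> | _]; rewrite ?andbF ?andbT.
rewrite -(pair_big_dep xpredT (fun (i j : 'I_n.+1) => (j == k) && (i < k))
                       (fun i j => F i j)).
under eq_bigr => i _ do rewrite big_mkcondr big_pred1_eq.
rewrite -big_mkcond -(big_mkord (fun i => i < k) (fun i => F i k)).
by rewrite (big_nat_widen 0 k n.+1 xpredT) // ltnW.
Qed.

Definition balanced n (N : 'I_n.+1 -> int) (c : seq (seq nat)) : bool :=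
  [forall k : 'I_n.+1, ((outflow c k)%:Z - (inflow c k)%:Z == N k)%R].

Lemma is_flow_cols n (N : 'I_n.+1 -> int) c :
  size c = n.+1 -> is_flow N (cols_flow n c) = balanced N c.
Proof.
move=> sz; apply: eq_forallb => k; rewrite -!(big_morph Posz PoszD (erefl 0%Z)).
rewrite /outflow /inflow sz -sum_edges_src -sum_edges_dst.
by congr (Posz _ - Posz _ == _)%R; apply: eq_bigr => e _; rewrite ffunE.
Qed.

Lemma balanced_rcons n t c x : size c = n -> shaped c -> size x = n ->
  balanced (Nvec n t) (rcons c x) = feasible t c && (x == surplus t c).
Proof.
move=> <- shc szx; rewrite /feasible shc /=.
apply/forallP/andP => [bal | [/allP feas /eqP ->] k].
  have bal_k k : k < size c -> outflow c k + nth 0 x k = t + inflow c k.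
    move=> lt_k; have := bal (inord k).
    rewrite /Nvec inordK ?lt_k ?outflow_rcons ?inflow_rcons //; last exact: ltnW.
    by move/eqP; lia.
  split; first by apply/allP => k; rewrite mem_iota => /bal_k; lia.
  apply/eqP/(@eq_from_nth _ 0) => [|k]; rewrite ?size_surplus // szx => lt_k.
  by rewrite nth_surplus //; have := bal_k k lt_k; lia.
rewrite /Nvec; case: ltnP => [lt_k | ge_k].
  rewrite outflow_rcons ?inflow_rcons ?nth_surplus //.
  by have := feas k; rewrite mem_iota => /(_ lt_k) le_k; apply/eqP; lia.
(* At the sink the equation follows from the others by summation. *)
have -> : (k : nat) = size c by have := ltn_ord k; lia.
rewrite outflow_rcons_size inflow_rcons_size -{1}(size_surplus t c).
rewrite -(big_nth 0 xpredT (fun a => a)) sum_surplus ?sub0r //.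
by rewrite /feasible shc; exact/allP.
Qed.

Definition flows_list n t : seq (flow_vec n) :=
  [seq cols_flow n (rcons c (surplus t c)) | c <- partial_flows t n].

Lemma flows_list_enumerates n t : enumerates_flows (Nvec n t) (flows_list n t).
Proof.
split.
  have shaped_compl d : shaped d -> shaped (rcons d (surplus t d)).
    by move=> shd; rewrite shaped_rcons shd size_surplus eqxx.
  rewrite map_inj_in_uniq ?partial_flows_uniq // => c c'.
  rewrite !mem_partial_flows => /andP[/eqP sz /andP[shc _]] /andP[/eqP sz' /andP[shc' _]].
  move/(congr1 (@flow_cols n)).
  by rewrite !cols_flowK ?size_rcons ?sz ?sz' ?shaped_compl // => /rcons_inj[].
move=> f; apply/mapP/idP => [[c c_in ->] | flow_f].
  move: c_in; rewrite mem_partial_flows => /andP[/eqP sz /[dup] feas /andP[shc _]].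
  by rewrite is_flow_cols ?size_rcons ?sz // balanced_rcons ?size_surplus // feas eqxx.
have [C [szC shC fE]] : exists C, [/\ size C = n.+1, shaped C & f = cols_flow n C].
  by exists (flow_cols f); rewrite size_flow_cols shaped_flow_cols flow_colsK.
case/lastP: C szC shC fE => [//|c x]; rewrite size_rcons shaped_rcons.
move=> [sz] /andP[shc /eqP szx] fE; rewrite fE is_flow_cols ?size_rcons ?sz // in flow_f.
move: flow_f; rewrite balanced_rcons // ?szx // => /andP[feas /eqP x_eq].
by exists c; rewrite ?mem_partial_flows ?sz ?eqxx ?feas // fE x_eq.
Qed.

Theorem proposition2p17 (n t : nat) : (1 <= n)%N ->
  exists s : seq (flow_vec n),
    enumerates_flows (Nvec n t) s /\
    ((t.+1 ^ 'C(n, 2) >= size s)%N /\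
     (size s >= \prod_(1 <= i < n) (i * t + 1))%N).
Proof.
move=> n_gt0; exists (flows_list n t); split; first exact: flows_list_enumerates.
rewrite size_map; split; first exact: size_partial_flows_leq.
by have := prod_leq_size_partial_flows t n; rewrite big_ltn // mul0n add0n mul1n.
Qed.
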